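(* Assume the walk's transition probabilities $p$ are reversible, i.e. there exist $m_V:\tilde V\to(0,\infty)$ and $m_E:\tilde E\to(0,\infty)$ with $p(a)m_V(o(a))=p(\bar a)m_V(t(a))=m_E(|a|)$ for all $a\in\tilde A$. Let $\Psi_\infty$ be the stationary state, and let $\psi_\infty$ be its restriction to $A_0$. Set: - $\boldsymbol{\alpha}_{in}=[\Psi_\infty(e_1),\dots,\Psi_\infty(e_r)]^\top$; - $m(\delta G_0)=\sum_jm_E(|e_j|)$; - $\boldsymbol{m}_{\delta E}=\big[\sqrt{m_E(|e_j|)/m(\delta G_0)}\big]_{j=1}^r$. Suppose $\langle\boldsymbol{m}_{\delta E},\boldsymbol{\alpha}_{in}\rangle\neq0$, where $\langle x,y\rangle=\sum_j\overline{x_j}y_j$. Then the following are equivalent: 1. there exists $a\in A_0$ with $\psi_\infty(a)\neq0$ or $\psi_\infty(\bar a)\neq0$; 2. for every $a\in A_0$, $\psi_\infty(a)\neq0$ or $\psi_\infty(\bar a)\neq0$.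
   Context: **Symmetric directed graphs.** A symmetric directed graph $(V,A)$ has the following structure. - Each arc $a$ has an origin $o(a)$ and a terminus $t(a)$. - Each arc $a$ has an inverse arc $\bar a$ with $o(\bar a)=t(a)$, $t(\bar a)=o(a)$ and $\bar{\bar a}=a$. - $|a|=|\bar a|$ denotes the undirected edge. **The tailed graph.** - Let $G_0=(V_0,A_0)$ be a finite symmetric directed graph and let $r\ge1$. - For $j=1,\dots,r$, let $\mathbb{P}_j$ be a semi-infinite path (''tail'') with vertices $v^j_0,v^j_1,\dots$ and arcs $A(\mathbb{P}_j)$ in both directions between consecutive vertices. - The end vertex is $o(\mathbb{P}_j)=v^j_0$. We require $V(\mathbb{P}_j)\cap V_0=\{o(\mathbb{P}_j)\}$, and distinct tails share no vertices outside $V_0$. - Let $\tilde G=(\tilde V,\tilde A)=G_0\cup\bigcup_j\mathbb{P}_j$, with undirected edge set $\tilde E$. - Let $e_j$ be the arc from $v^j_1$ to $o(\mathbb{P}_j)$. **Transition probabilities.** Let $p:\tilde A\to(0,1]$ satisfy: - $\sum_{o(a)=u}p(a)=1$ for all $u$; - $p(a)=1/2$ on $\bigcup_jA(\mathbb{P}_j)\setminus\{\bar e_1,\dots,\bar e_r\}$. **Szegedy walk.** $$(U\Psi)(a)=\sum_{b:\,t(b)=o(a)}\big(2\sqrt{p(a)p(\bar b)}-\delta_{\bar a,b}\big)\Psi(b).$$ **Initial state and stationary state.** Fix $\alpha_1,\dots,\alpha_r\in\mathbb{C}$. - $\Psi_0(a)=\alpha_j$ for $a\in A(\mathbb{P}_j)$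 with $\mathrm{dist}(o(\mathbb{P}_j),t(a))<\mathrm{dist}(o(\mathbb{P}_j),o(a))$. - $\Psi_0(a)=0$ otherwise. - Set $\Psi_{n+1}=U\Psi_n$. - The pointwise limit $\Psi_\infty=\lim_n\Psi_n$ exists (known fact) and is called the stationary state. *)

From HB Require Import structures.
From mathcomp Require Import all_boot all_order all_algebra.
From mathcomp Require Import complex.
Set Implicit Arguments. Unset Strict Implicit. Unset Printing Implicit Defensive.
Import Order.TTheory GRing.Theory Num.Theory.
Local Open Scope ring_scope.

(* The tailed graph  G~ = G0 ∪ P_1 ∪ ... ∪ P_r.                             *)
(* Tail P_j (j : 'I_r) has vertices v^j_0 = att j ∈ V0, v^j_1, v^j_2, ...   *)
(*   Out j k : the arc v^j_k -> v^j_{k+1}   (pointing away from G0)         *)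
(*   In  j k : the arc v^j_{k+1} -> v^j_k   (pointing towards G0)           *)
(* so that e_j = In j 0 and \bar e_j = Out j 0.                             *)
(* Vertices: Vert0 v (v ∈ V0) and Tv j k = v^j_{k+1} (tail vertices off V0) *)

Inductive tarc (A0 : Type) (r : nat) : Type :=
  | Arc0 of A0
  | Out of 'I_r & nat
  | In of 'I_r & nat.
Arguments Arc0 {A0 r}.
Arguments Out {A0 r}.
Arguments In {A0 r}.

Inductive tvert (V0 : Type) (r : nat) : Type :=
  | Vert0 of V0
  | Tv of 'I_r & nat.
Arguments Vert0 {V0 r}.
Arguments Tv {V0 r}.

Definition tarc_enc (A0 : Type) r (a : tarc A0 r) : A0 + ('I_r * nat) + ('I_r * nat) :=
  match a with Arc0 b => inl (inl b) | Out j k => inl (inr (j, k)) | In j k => inr (j, k) end.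
Definition tarc_dec (A0 : Type) r (x : A0 + ('I_r * nat) + ('I_r * nat)) : tarc A0 r :=
  match x with inl (inl b) => Arc0 b | inl (inr (j, k)) => Out j k | inr (j, k) => In j k end.
Lemma tarc_encK (A0 : Type) r : cancel (@tarc_enc A0 r) (@tarc_dec A0 r).
Proof. by case. Qed.
HB.instance Definition _ (A0 : eqType) r :=
  Equality.copy (tarc A0 r) (can_type (@tarc_encK A0 r)).

Section Tailed.
Variables (V0 A0 : Type) (o0 t0 : A0 -> V0) (inv0 : A0 -> A0) (r : nat)
          (att : 'I_r -> V0).

Definition tailv (j : 'I_r) (k : nat) : tvert V0 r :=
  if k is k'.+1 then Tv j k' else Vert0 (att j).

Definition torig (a : tarc A0 r) : tvert V0 r :=
  match a with Arc0 b => Vert0 (o0 b) | Out j k => tailv j k | In j k => tailv j k.+1 end.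
Definition tterm (a : tarc A0 r) : tvert V0 r :=
  match a with Arc0 b => Vert0 (t0 b) | Out j k => tailv j k.+1 | In j k => tailv j k end.
Definition tinv (a : tarc A0 r) : tarc A0 r :=
  match a with Arc0 b => Arc0 (inv0 b) | Out j k => In j k | In j k => Out j k end.

End Tailed.

Section Sums.
Variables (V0 A0 : finType) (o0 t0 : A0 -> V0) (r : nat) (att : 'I_r -> V0).
Variable (M : nmodType).

(* \sum_{a : o(a) = u} F a   (the set of such arcs is finite) *)
Definition out_sum (u : tvert V0 r) (F : tarc A0 r -> M) : M :=
  match u with
  | Vert0 v => \sum_(b : A0 | o0 b == v) F (Arc0 b) + \sum_(j < r | att j == v) F (Out j 0)
  | Tv j k => F (Out j k.+1) + F (In j k)
  end.

(* \sum_{b : t(b) = u} F b *)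
Definition in_sum (u : tvert V0 r) (F : tarc A0 r -> M) : M :=
  match u with
  | Vert0 v => \sum_(b : A0 | t0 b == v) F (Arc0 b) + \sum_(j < r | att j == v) F (In j 0)
  | Tv j k => F (Out j k) + F (In j k.+1)
  end.
End Sums.

Section Walk.
Variables (R : rcfType) (V0 A0 : finType) (o0 t0 : A0 -> V0) (inv0 : A0 -> A0)
          (r : nat) (att : 'I_r -> V0) (p : tarc A0 r -> R).

Local Open Scope complex_scope.

Definition szegedy (Psi : tarc A0 r -> R[i]) (a : tarc A0 r) : R[i] :=
  in_sum t0 att (torig o0 att a)
    (fun b => ((2%:R * Num.sqrt (p a * p (tinv inv0 b)))%:C
               - (if tinv inv0 a == b then 1 else 0)) * Psi b).

Definition psi0 (alpha : 'I_r -> R[i]) (a : tarc A0 r) : R[i] :=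
  match a with In j _ => alpha j | _ => 0 end.

Definition psi_n (alpha : 'I_r -> R[i]) (n : nat) : tarc A0 r -> R[i] :=
  iter n szegedy (psi0 alpha).
End Walk.

Definition cvgC (R : rcfType) (u : nat -> R[i]) (l : R[i]) : Prop :=
  forall e : R, 0 < e -> exists N : nat, forall n : nat, (N <= n)%N ->
    `|u n - l| < e%:C%C.

Definition adj0 (V0 A0 : finType) (o0 t0 : A0 -> V0) : rel V0 :=
  fun u v => [exists a : A0, (o0 a == u) && (t0 a == v)].

From HB Require Import structures.
From mathcomp Require Import all_boot all_order all_algebra.
From mathcomp Require Import complex.
From mathcomp Require Import ring.
Import Order.TTheory GRing.Theory Num.Theory.
Local Open Scope ring_scope.

Set Implicit Arguments. Unset Strict Implicit. Unset Printing Implicit Defensive.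

(** The stationary state is a fixed point of U, and U acts on an arc [a] leaving
   the vertex [v] as [Psi a |-> 2 sqrt(p a) F(v) - Psi(bar a)], where [F(v)] is
   a weighted inflow at [v]. Hence [Psi a + Psi (bar a) = 2 sqrt(m_E |a|) G(o a)]
   with [G = F / sqrt m_V]; the left side is symmetric in [a] and [bar a], so [G]
   takes the same value at both ends of every edge and is constant on the
   connected graph [G0]. If [Psi] vanished on both orientations of one edge, [G]
   would vanish everywhere: [Psi] would be antisymmetric on [A0] and every
   inflow would be zero. Summing [sqrt(m_V v) F(v)] over [V0] then gives
   [sum_j sqrt(m_E |e_j|) Psi(e_j) = 0], against the hypothesis on [alpha_in].
   So condition 2 always holds, and it implies condition 1 since [A0] is
   nonempty. *)

Section Limits.
Variable K : numFieldType.

Definition tends_to (u : nat -> K) (l : K) : Prop :=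
  forall e : K, 0 < e -> exists N : nat, forall n : nat, (N <= n)%N -> `|u n - l| < e.

Lemma tends_to_unique u l l' : tends_to u l -> tends_to u l' -> l = l'.
Proof.
move=> ul ul'; apply/eqP; rewrite -subr_eq0; apply/negP => /negP dl_neq0.
have he : 0 < `|l - l'| / 2 by rewrite divr_gt0 ?normr_gt0.
have [N1 H1] := ul _ he; have [N2 H2] := ul' _ he.
set n := maxn N1 N2.
have : `|l - l'| < `|l - l'| / 2 + `|l - l'| / 2.
  apply: le_lt_trans (ltrD (H1 n (leq_maxl _ _)) (H2 n (leq_maxr _ _))).
  have <- : (u n - l') - (u n - l) = l - l' by rewrite opprB addrC addrA subrK.
  by rewrite [X in _ <= X]addrC; apply: ler_normB.
by rewrite -splitr ltxx.
Qed.

Lemma tends_to_ext u v l : u =1 v -> tends_to u l -> tends_to v l.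
Proof. by move=> uv ul e /ul[N HN]; exists N => n /HN; rewrite uv. Qed.

Lemma tends_to_succ u l : tends_to u l -> tends_to (fun n => u n.+1) l.
Proof. by move=> ul e /ul[N HN]; exists N => n le_Nn; apply/HN/leqW. Qed.

Lemma tends_toD u v l m :
  tends_to u l -> tends_to v m -> tends_to (fun n => u n + v n) (l + m).
Proof.
move=> ul vm e e_gt0; have e2_gt0 : 0 < e / 2 by rewrite divr_gt0.
have [N1 H1] := ul _ e2_gt0; have [N2 H2] := vm _ e2_gt0.
exists (maxn N1 N2) => n; rewrite geq_max => /andP[/H1 lt1 /H2 lt2].
rewrite (splitr e); apply: le_lt_trans (ltrD lt1 lt2).
by rewrite opprD addrACA; apply: ler_normD.
Qed.

Lemma tends_toMl k u l : tends_to u l -> tends_to (fun n => k * u n) (k * l).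
Proof.
move=> ul e e_gt0; have [->|k_neq0] := eqVneq k 0.
  by exists 0%N => n _; rewrite !mul0r subrr normr0.
have k_gt0 : 0 < `|k| by rewrite normr_gt0.
have [N HN] := ul _ (divr_gt0 e_gt0 k_gt0); exists N => n /HN lt_n /=.
rewrite -mulrBr normrM.
by rewrite -(ltr_pM2l k_gt0) [X in _ < X]mulrC divfK ?gt_eqF in lt_n.
Qed.

Lemma tends_to_sum (I : Type) (s : seq I) (P : pred I) (g : I -> nat -> K) (l : I -> K) :
  (forall i, tends_to (g i) (l i)) ->
  tends_to (fun n => \sum_(i <- s | P i) g i n) (\sum_(i <- s | P i) l i).
Proof.
move=> gl; elim: s => [|x s IH].
  by move=> e e_gt0; exists 0%N => n _; rewrite !big_nil subrr normr0.
rewrite big_cons; case Px: (P x).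
  by apply: tends_to_ext (tends_toD (gl x) IH) => n; rewrite big_cons Px.
by apply: tends_to_ext IH => n; rewrite big_cons Px.
Qed.

End Limits.

Lemma sum_antisymmetric_eq0 (K : numFieldType) (I : finType) (s : I -> I) (f : I -> K) :
  involutive s -> (forall i, f (s i) = - f i) -> \sum_i f i = 0.
Proof.
move=> sK fN; suff: (\sum_i f i) *+ 2 = 0 by move/eqP; rewrite mulrn_eq0 => /eqP.
rewrite mulr2n {1}(reindex_inj (inv_inj sK)) -big_split big1 // => i _.
by rewrite fN /= addNr.
Qed.

Lemma cvgC_tends_to (R : rcfType) (u : nat -> R[i]) l : cvgC u l -> tends_to u l.
Proof.
move=> ul e; rewrite ltcE /= => /andP[/eqP Im_e Re_e_gt0].
have -> : e = (complex.Re e)%:C%C by case: e Im_e {Re_e_gt0} => a b /= ->.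
exact: ul.
Qed.

Section InSums.
Variables (V0 A0 : finType) (t0 : A0 -> V0) (r : nat) (att : 'I_r -> V0).
Local Notation tarc := (tarc A0 r).

Lemma in_sum_ext (M : nmodType) u (F G : tarc -> M) :
  F =1 G -> in_sum t0 att u F = in_sum t0 att u G.
Proof.
by move=> FG; case: u => [v|j k] /=; rewrite ?FG //; congr (_ + _); apply: eq_bigr.
Qed.

Lemma in_sumB (M : zmodType) u (F G : tarc -> M) :
  in_sum t0 att u (fun b => F b - G b) = in_sum t0 att u F - in_sum t0 att u G.
Proof. by case: u => [v|j k] /=; rewrite ?sumrB opprD addrACA. Qed.

Lemma in_sumMl (S : pzRingType) u k (F : tarc -> S) :
  in_sum t0 att u (fun b => k * F b) = k * in_sum t0 att u F.
Proof. by case: u => [v|j m] /=; rewrite mulrDr ?mulr_sumr. Qed.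

Lemma in_sum_delta (S : pzRingType) v (d : tarc) (F : tarc -> S) :
  tterm t0 att d = Vert0 v ->
  in_sum t0 att (Vert0 v) (fun b => (if d == b then 1 else 0) * F b) = F d.
Proof.
have eq_Arc0 (x y : A0) : (Arc0 x == Arc0 y :> tarc) = (x == y).
  by apply/eqP/eqP => [[]|->].
have eq_In0 (x y : 'I_r) : (In x 0 == In y 0 :> tarc) = (x == y).
  by apply/eqP/eqP => [[]|->].
case: d => [d|j k|j [|k]] //= [<-].
- rewrite (bigD1 d) //= eqxx mul1r big1 ?addr0 => [|b /andP[_ b_neq_d]].
    by rewrite big1 ?addr0 // => j _; rewrite mul0r.
  by rewrite eq_Arc0 eq_sym (negbTE b_neq_d) mul0r.
- rewrite big1 ?add0r => [|b _]; last by rewrite mul0r.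
  rewrite (bigD1 j) //= eqxx mul1r big1 ?addr0 // => i /andP[_ i_neq_j].
  by rewrite eq_In0 eq_sym (negbTE i_neq_j) mul0r.
Qed.

Lemma in_sum_tends_to (K : numFieldType) u (c : tarc -> K) (X : nat -> tarc -> K)
    (L : tarc -> K) :
  (forall b, tends_to (X^~ b) (L b)) ->
  tends_to (fun n => in_sum t0 att u (fun b => c b * X n b))
           (in_sum t0 att u (fun b => c b * L b)).
Proof.
move=> XL; case: u => [v|j k] /=; apply: tends_toD;
  by try apply: tends_to_sum => b; apply/tends_toMl/XL.
Qed.

End InSums.

Section Szegedy.
Variables (R : rcfType) (V0 A0 : finType) (o0 t0 : A0 -> V0) (inv0 : A0 -> A0)
          (r : nat) (att : 'I_r -> V0) (p : tarc A0 r -> R).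
Local Open Scope complex_scope.
Local Notation tarc := (tarc A0 r).
Local Notation U := (szegedy o0 t0 inv0 att p).

Lemma szegedy_fixpoint alpha (Psi : tarc -> R[i]) :
  (forall a, tends_to (fun n => psi_n o0 t0 inv0 att p alpha n a) (Psi a)) ->
  forall a, U Psi a = Psi a.
Proof.
move=> cvg_Psi a; apply: tends_to_unique (tends_to_succ (cvg_Psi a)).
exact: in_sum_tends_to.
Qed.

Definition inflow (Psi : tarc -> R[i]) (v : V0) : R[i] :=
  in_sum t0 att (Vert0 v) (fun b => (Num.sqrt (p (tinv inv0 b)))%:C * Psi b).

Hypothesis t0_inv : forall a, t0 (inv0 a) = o0 a.

Lemma szegedy_from_V0 Psi a v : 0 <= p a -> torig o0 att a = Vert0 v ->
  U Psi a = (2%:R * Num.sqrt (p a))%:C * inflow Psi v - Psi (tinv inv0 a).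
Proof.
move=> p_ge0 o_a; have t_bar_a : tterm t0 att (tinv inv0 a) = Vert0 v.
  by case: a {p_ge0} o_a => //= b; rewrite t0_inv.
rewrite /szegedy o_a /inflow -in_sumMl -(in_sum_delta Psi t_bar_a) -in_sumB.
apply: in_sum_ext => b.
by rewrite mulrBl sqrtrM // !rmorphM /= !mulrA.
Qed.

End Szegedy.

Section Reversible.
Variables (R : rcfType) (V0 A0 : finType) (o0 t0 : A0 -> V0) (inv0 : A0 -> A0)
          (r : nat) (att : 'I_r -> V0) (p : tarc A0 r -> R).
Hypothesis invK : involutive inv0.
Hypothesis o0_inv : forall a, o0 (inv0 a) = t0 a.
Hypothesis t0_inv : forall a, t0 (inv0 a) = o0 a.
Hypothesis connected : forall u v : V0, connect (adj0 o0 t0) u v.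
Variables (mV : tvert V0 r -> R) (mE : tarc A0 r -> R).
Hypothesis mV_gt0 : forall u, 0 < mV u.
Hypothesis mE_gt0 : forall a, 0 < mE a.
Hypothesis mE_tinv : forall a, mE (tinv inv0 a) = mE a.
Hypothesis reversible : forall a, p a * mV (torig o0 att a) = mE a /\
                            p (tinv inv0 a) * mV (tterm t0 att a) = mE a.
Variable Psi : tarc A0 r -> R[i].
Local Open Scope complex_scope.
Local Notation inflow := (inflow t0 inv0 att p Psi).

Lemma weighted_inflow_sum :
  \sum_v (Num.sqrt (mV (Vert0 v)))%:C * inflow v =
  \sum_b (Num.sqrt (mE (Arc0 b)))%:C * Psi (Arc0 b) +
  \sum_(j < r) (Num.sqrt (mE (In j 0)))%:C * Psi (In j 0).
Proof.
have weight_in b : (Num.sqrt (mV (tterm t0 att b)))%:C * (Num.sqrt (p (tinv inv0 b)))%:C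
                   = (Num.sqrt (mE b))%:C.
  by rewrite -rmorphM -sqrtrM ?(ltW (mV_gt0 _)) // mulrC (reversible b).2.
rewrite (partition_big t0 xpredT) // [X in _ + X](partition_big att xpredT) //=.
rewrite -big_split; apply: eq_bigr => v _; rewrite /inflow /= mulrDr !mulr_sumr.
by congr (_ + _); apply: eq_bigr => b /eqP <-; rewrite mulrA;
  [rewrite -(weight_in (Arc0 b)) | rewrite -(weight_in (In b 0))].
Qed.

Hypothesis Psi_fix : forall a, szegedy o0 t0 inv0 att p Psi a = Psi a.

Definition potential (v : V0) : R[i] := inflow v / (Num.sqrt (mV (Vert0 v)))%:C.

Lemma pair_sum_potential a v : torig o0 att a = Vert0 v ->
  Psi a + Psi (tinv inv0 a) = (2%:R * Num.sqrt (mE a))%:C * potential v.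
Proof.
move=> o_a; have p_a : p a = mE a / mV (Vert0 v).
  by rewrite -(reversible a).1 o_a mulfK // gt_eqF.
have p_ge0 : 0 <= p a by rewrite p_a divr_ge0 // ltW.
rewrite -{1}Psi_fix (szegedy_from_V0 t0_inv _ p_ge0 o_a) subrK /potential p_a.
by rewrite sqrtrM ?sqrtrV ?(ltW (mE_gt0 _)) ?(ltW (mV_gt0 _)) // !rmorphM /= fmorphV; ring.
Qed.

Lemma pair_sum_coef_neq0 a : (2%:R * Num.sqrt (mE a))%:C != 0 :> R[i].
Proof.
by rewrite (fmorph_eq0 (real_complex R)) mulf_neq0 ?pnatr_eq0 // sqrtr_eq0 -ltNge.
Qed.

Lemma potential_edge b : potential (o0 b) = potential (t0 b).
Proof.
have out_b := @pair_sum_potential (Arc0 b) (o0 b) erefl.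
have in_b := @pair_sum_potential (Arc0 (inv0 b)) (t0 b) (congr1 Vert0 (o0_inv b)).
rewrite /= invK in in_b; apply: (mulfI (pair_sum_coef_neq0 (Arc0 b))).
by rewrite -out_b -(mE_tinv (Arc0 b)) -in_b addrC.
Qed.

Lemma potential_const u v : potential u = potential v.
Proof.
have /connectP[s] := connected u v; elim: s u => [|w s IH] u /=; first by move=> _ ->.
case/andP=> /existsP[b /andP[/eqP <- /eqP <-]] walk last_w.
by rewrite potential_edge; apply: IH.
Qed.

Lemma edge_nonvanishing :
  \sum_(j < r) (Num.sqrt (mE (In j 0)))%:C * Psi (In j 0) != 0 ->
  forall b, Psi (Arc0 b) != 0 \/ Psi (Arc0 (inv0 b)) != 0.
Proof.
move=> boundary_neq0 b.
have [Psi_b|] := eqVneq (Psi (Arc0 b)) 0; last by left.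
have [Psi_ib|] := eqVneq (Psi (Arc0 (inv0 b))) 0; last by right.
have potential0 v : potential v = 0.
  rewrite -(potential_const (o0 b)); apply: (mulfI (pair_sum_coef_neq0 (Arc0 b))).
  by rewrite -pair_sum_potential //= Psi_b Psi_ib addr0 mulr0.
have Psi_antisym c : Psi (Arc0 (inv0 c)) = - Psi (Arc0 c).
  apply/eqP; rewrite -addr_eq0 addrC.
  by rewrite (pair_sum_potential (v := o0 c)) // potential0 mulr0.
have inflow0 v : inflow v = 0.
  have := potential0 v; rewrite /potential => /eqP.
  rewrite mulf_eq0 invr_eq0 (fmorph_eq0 (real_complex R)) sqrtr_eq0 leNgt mV_gt0 orbF.
  by move/eqP.
have interior0 : \sum_c (Num.sqrt (mE (Arc0 c)))%:C * Psi (Arc0 c) = 0.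
  apply: (sum_antisymmetric_eq0 invK) => c.
  by rewrite Psi_antisym -[Arc0 (inv0 c)]/(tinv inv0 (Arc0 c)) mE_tinv mulrN.
have := weighted_inflow_sum; rewrite interior0 add0r big1 => [boundary0|v _].
  by rewrite -boundary0 eqxx in boundary_neq0.
by rewrite inflow0 mulr0.
Qed.

End Reversible.

Theorem proposition5p1
  (R : rcfType) (V0 A0 : finType) (o0 t0 : A0 -> V0) (inv0 : A0 -> A0)
  (Hinv : forall a, inv0 (inv0 a) = a)
  (Hoinv : forall a, o0 (inv0 a) = t0 a)
  (Htinv : forall a, t0 (inv0 a) = o0 a)
  (Hconn : forall u v : V0, connect (adj0 o0 t0) u v)
  (HA0 : (0 < #|A0|)%N)
  (r : nat) (Hr : (1 <= r)%N) (att : 'I_r -> V0)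
  (p : tarc A0 r -> R)
  (Hp : forall a, 0 < p a <= 1)
  (Hpsum : forall u : tvert V0 r, out_sum o0 att u p = 1)
  (HpIn : forall (j : 'I_r) (k : nat), p (In j k) = 2%:R^-1)
  (HpOut : forall (j : 'I_r) (k : nat), p (Out j k.+1) = 2%:R^-1)
  (mV : tvert V0 r -> R) (mE : tarc A0 r -> R)
  (HmV : forall u, 0 < mV u)
  (HmE : forall a, 0 < mE a)
  (HmEinv : forall a, mE (tinv inv0 a) = mE a)
  (Hrev : forall a, p a * mV (torig o0 att a) = mE a /\
                    p (tinv inv0 a) * mV (tterm t0 att a) = mE a)
  (alpha : 'I_r -> R[i]) (Psi_inf : tarc A0 r -> R[i])
  (Hlim : forall a, cvgC (fun n => psi_n o0 t0 inv0 att p alpha n a) (Psi_inf a))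
  (Horth : let m_dG0 := \sum_(j < r) mE (In j 0) in
           \sum_(j < r) ((Num.sqrt (mE (In j 0) / m_dG0))%:C)^*%C * Psi_inf (In j 0)
           != 0) :
  (exists a : A0, Psi_inf (Arc0 a) != 0 \/ Psi_inf (Arc0 (inv0 a)) != 0) <->
  (forall a : A0, Psi_inf (Arc0 a) != 0 \/ Psi_inf (Arc0 (inv0 a)) != 0).
Proof.
have Psi_fix := szegedy_fixpoint (fun a => cvgC_tends_to (Hlim a)).
have boundary_neq0 : \sum_(j < r) (Num.sqrt (mE (In j 0)))%:C%C * Psi_inf (In j 0) != 0.
  move: Horth; cbv zeta; set m := \sum_(j < r) mE (In j 0); apply: contraNneq => boundary0.
  rewrite (eq_bigr (fun j => (Num.sqrt m^-1)%:C%C *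
                     ((Num.sqrt (mE (In j 0)))%:C%C * Psi_inf (In j 0)))) => [|j _].
    by rewrite -mulr_sumr boundary0 mulr0.
  by rewrite conjc_real sqrtrM ?(ltW (HmE _)) // rmorphM /= mulrA [_ * (_)%:C%C]mulrC.
have all_edges := edge_nonvanishing Hinv Hoinv Htinv Hconn HmV HmE HmEinv Hrev Psi_fix
                  boundary_neq0.
split=> [_|]; first exact: all_edges.
by have /card_gt0P[b _] := HA0; exists b.
Qed.
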